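(* Let $k\subset K$ be a finite totally ramified Galois extension of complete discrete valuation fields with Galois group $G$ and degree $n$, and let $B\subset K[G]\setminus\{0\}$ be a finite graded-independent set. 1. Let $c:B\to k$ be a function which is not identically zero, and let $m=\min\{v(c_b)+d(b):\ b\in B,\ c_b\ne0\}$. Then $d(\sum_{b\in B}c_bb)=m$, and $\mathfrak p(\sum_{b\in B}c_bb)=\sum_{b}\lambda_b\,\mathfrak p(b)$, the sum over those $b\in B$ with $c_b\neq 0$ and $v(c_b)+d(b)=m$, for some nonzero $\lambda_b\in\bar k$. 2. For every $i\in\mathbb Z$, $\mathfrak C_i\cap\big(\bigoplus_{b\in B}k\cdot b\big)=\bigoplus_{b\in B}\pi_k^{\lfloor(i-d-d(b)-1)/n\rfloor+1}O_k\cdot b$. Moreover, if $B$ has exactly $n$ elements and $B\subset k[G]$, then $B$ is a graded base for $K/k$.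
   Context: $O_k$, $O_K$ are the rings of integers, $\pi_k$ a uniformizer of $k$, $\pi$ a uniformizer of $K$, $\bar k$ the residue field, $r:O_K\to\bar k$ reduction, $v$ the valuation of $K$ with $v(K^* )=\mathbb Z$, $d=v(\mathfrak D_{K/k})-n+1$ the ramification depth ($\mathfrak D_{K/k}$ the different), $c_\pi=\mathrm{Tr}_{K/k}(\pi^{-d})\in O_k^*$, $R=\bar k[X]/(X^n-1)$. $f=\sum a_\sigma\sigma\in K[G]$ acts on $K$ by $f(x)=\sum a_\sigma\sigma(x)$. $\mathfrak C_i=\{f\in K[G]: v(f(x))-v(x)\ge i\ \forall x\in K^*\}$. For $f\in\mathfrak C_i$, $p_i(f)=r(c_\pi)^{-1}\sum_{j=0}^{n-1}r(f(\pi^{j-i})/\pi^j)X^j\in R$. For $f\ne0$: $d(f)=i$ iff $f\in\mathfrak C_{i+d}\setminus\mathfrak C_{i+d+1}$, and $\mathfrak p(f)=p_{d(f)+d}(f)$. For $B\subset K[G]\setminus\{0\}$ and $s\in\mathbb Z$, $B_s=\{f\in B: d(f)\equiv s\bmod n\}$; $B$ is graded-independent if for every $s$ the family $(\mathfrak p(b))_{b\in B_s}$ is $\bar k$-linearly independent in $R$; $B$ is a graded base for $K/k$ if $B\subset k[G]$ is graded-independent and generates $k[G]$ as a $k$-vector space. *)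

From HB Require Import structures.
From mathcomp Require Import all_boot all_order all_algebra all_fingroup all_field.
From Stdlib Require Import ClassicalEpsilon.
Set Implicit Arguments. Unset Strict Implicit. Unset Printing Implicit Defensive.
Import Order.TTheory GRing.Theory Num.Theory.
Local Open Scope ring_scope.

Section Defs.
Variables (F : fieldType) (L : splittingFieldType F).

Definition galG := gal_of (fullv : {vspace L}).

(* The group ring K[G], K = L: finitely supported coefficient functions. *)
Definition KG := {ffun galG -> L}.

Definition act (f : KG) (x : L) : L := \sum_(s : galG) f s * s x.

(* k[G]: coefficients in k = 1%VS *)
Definition in_kG (f : KG) : Prop := forall s, f s \in (1%VS : {vspace L}).

(* v : L -> int is meaningful on nonzero elements; v 0 is irrelevant. *)
Variable v : L -> int.

(* "v(x) >= m", with v(0) = +oo *)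
Definition vge (x : L) (m : int) : Prop := x = 0 \/ m <= v x.

Definition is_dval : Prop :=
  [/\ forall x y, x != 0 -> y != 0 -> v (x * y) = v x + v y,
      forall x y, x != 0 -> y != 0 -> x + y != 0 -> Num.min (v x) (v y) <= v (x + y)
    & exists x, x != 0 /\ v x = 1].

Definition cauchy (u : nat -> L) : Prop :=
  forall M : int, exists N, forall p q, (N <= p)%N -> (N <= q)%N -> vge (u p - u q) M.
Definition converges_to (u : nat -> L) (l : L) : Prop :=
  forall M : int, exists N, forall p, (N <= p)%N -> vge (u p - l) M.

Definition complete_K : Prop := forall u, cauchy u -> exists l, converges_to u l.
Definition complete_k : Prop :=
  forall u, (forall p, u p \in (1%VS : {vspace L})) -> cauchy u ->
  exists2 l, l \in (1%VS : {vspace L}) & converges_to u l.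

Definition totally_ramified : Prop :=
  (forall x : F, x != 0 -> ((\dim (fullv : {vspace L}))%:Z %| v x%:A)%Z) /\
  exists x : F, x != 0 /\ v x%:A = (\dim (fullv : {vspace L}))%:Z.

Definition residue_map (kbar : fieldType) (r : L -> kbar) : Prop :=
  [/\ forall x y, vge x 0 -> vge y 0 -> r (x + y) = r x + r y,
      forall x y, vge x 0 -> vge y 0 -> r (x * y) = r x * r y,
      r 1 = 1,
      forall a, exists2 x, vge x 0 & r x = a
    & forall x, vge x 0 -> (r x = 0 <-> vge x 1)].

(* delta = v(D_{K/k}): the inverse different {x | Tr(x O_K) <= O_k} equals
   {x | v x >= - delta}. Trace Tr_{K/k} = galTrace. *)
Definition different_val (delta : int) : Prop :=
  forall x : L, (forall y, vge y 0 -> vge (galTrace 1 fullv (x * y)) 0) <->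
                vge x (- delta).

Definition inC (i : int) (f : KG) : Prop :=
  forall x : L, x != 0 -> act f x = 0 \/ v x + i <= v (act f x).

(* d(f) for f != 0: the unique i with f in C_{i+d} \ C_{i+d+1} (0 if none) *)
Definition depth (d : int) (f : KG) : int :=
  match excluded_middle_informative
          (exists i : int, inC (i + d) f /\ ~ inC (i + d + 1) f) with
  | left h => proj1_sig (constructive_indefinite_description _ h)
  | right _ => 0
  end.

(* p_i(f) in R = kbar[X]/(X^n - 1), represented by its reduced polynomial
   of degree < n *)
Definition p_ (kbar : fieldType) (r : L -> kbar) (d : int) (pi : L)
  (i : int) (f : KG) : {poly kbar} :=
  let n := \dim (fullv : {vspace L}) in
  let cpi := galTrace 1 fullv (pi ^ (- d)) in
  \sum_(j < n) ((r cpi)^-1 * r (act f (pi ^ (j%:Z - i)) / pi ^+ j))%:P * 'X^j.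

Definition frakp (kbar : fieldType) (r : L -> kbar) (d : int) (pi : L)
  (f : KG) : {poly kbar} := p_ r d pi (depth d f + d) f.

(* graded independence of the finite set B (a duplicate-free list) *)
Definition graded_independent (kbar : fieldType) (r : L -> kbar) (d : int)
  (pi : L) (B : seq KG) : Prop :=
  forall (s : int) (lam : KG -> kbar),
    \sum_(b <- B | (depth d b == s %[mod (\dim (fullv : {vspace L}))%:Z])%Z)
        lam b *: frakp r d pi b = 0 ->
    forall b, b \in B -> (depth d b == s %[mod (\dim (fullv : {vspace L}))%:Z])%Z ->
      lam b = 0.

Definition lincomb (B : seq KG) (c : KG -> F) : KG :=
  [ffun s => \sum_(b <- B) (c b)%:A * b s].

Definition graded_base (kbar : fieldType) (r : L -> kbar) (d : int)
  (pi : L) (B : seq KG) : Prop :=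
  [/\ forall b, b \in B -> in_kG b,
      graded_independent r d pi B
    & forall f, in_kG f -> exists c : KG -> F, f = lincomb B c].

End Defs.

From Pilot Require Import Defs.
From HB Require Import structures.
From mathcomp Require Import all_boot all_order all_algebra all_fingroup all_field.
From mathcomp Require Import zify.
From Stdlib Require Import ClassicalEpsilon.
(* Imported again so that [act] is the group-ring action of Defs, not fingroup's. *)
Import Defs.
Import Order.TTheory GRing.Theory Num.Theory.
Set Implicit Arguments. Unset Strict Implicit. Unset Printing Implicit Defensive.
Local Open Scope ring_scope.

(* As K/k is totally ramified, 1, pi, ..., pi^(n-1) is a k-basis of K whose nonzero
   terms a_j pi^j have pairwise distinct valuations.  Hence every element of O_K is
   congruent modulo pi to an element of k, and each automorphism shifts valuations by a
   bounded amount, so every f in K[G] lies in some C_i.  On C_i the map p_i is additive,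
   vanishes on C_(i+1), and p_(i+v(a))(a f) = u(a) p_i(f) for nonzero a in k, where u(a)
   is the residue of a pi^(-v(a)).  For f = sum_b c_b b every term lies in C_(m+d), and
   p_(m+d)(f) is the sum of the u(c_b) p(b) with v(c_b) + d(b) = m; all these b have
   d(b) = m mod n since n divides v(c_b), so graded independence makes the sum nonzero,
   whence d(f) = m.  Part 2 reads off m >= i - d, and part 3 holds because by part 1 the
   n elements of B are free in the n-dimensional space k[G].  Neither completeness nor
   the value of the different is needed. *)

Lemma seq_argmin (T : eqType) (s : seq T) (P : pred T) (g : T -> int) :
  has P s -> exists2 x, (x \in s) && P x & forall y, y \in s -> P y -> g x <= g y.
Proof.
elim: s => //= z s IH; have [Pz|nPz] := boolP (P z) => /=; last first.
  move=> /IH[x /andP[xs Px] hx]; exists x; first by rewrite inE xs orbT.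
  by move=> y; rewrite inE => /predU1P[->|/hx//]; rewrite (negbTE nPz).
have [/IH[x /andP[xs Px] hx]|/hasPn nPs] := boolP (has P s) => _; last first.
  exists z; first by rewrite inE eqxx.
  by move=> y; rewrite inE => /predU1P[->//|/nPs/negbTE->].
have [le_zx|/ltW lt_xz] := lerP (g z) (g x).
  exists z; first by rewrite inE eqxx.
  by move=> y; rewrite inE => /predU1P[->//|ys Py]; apply: le_trans le_zx (hx y ys Py).
exists x; first by rewrite inE xs orbT.
by move=> y; rewrite inE => /predU1P[->//|]; apply: hx.
Qed.

Lemma ler_Nmul_norm (j N t : int) : 0 <= j <= N -> - (N * `|t|) <= j * t.
Proof.
by case/andP=> j0 jN; have [t0|t0] := lerP 0 t; [rewrite ger0_norm | rewrite ltr0_norm]; nia.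
Qed.

Lemma int_threshold (P : int -> Prop) i j : i <= j -> P i -> ~ P j ->
  exists k, P k /\ ~ P (k + 1).
Proof.
move=> le_ij; have [k ->] : exists k : nat, j = i + k%:Z.
  by exists `|j - i|%N; rewrite gez0_abs ?subr_ge0 // subrKC.
elim: k i {le_ij} => [|k IH] i Pi; first by rewrite addr0.
have [Pi1 nPik|nPi1 _] := classic (P (i + 1)); last by exists i.
by apply: IH Pi1 _; rewrite -addrA -PoszD add1n.
Qed.

Lemma ceilz_leP (q t N : int) : 0 < N -> (((q - 1) %/ N)%Z + 1 <= t) = (q <= t * N).
Proof. by move=> N0; rewrite lezD1 ltz_divLR // ltrBlDr ltzD1. Qed.

Section GroupRing.
Variables (F : fieldType) (L : splittingFieldType F).
Implicit Types (f : KG L) (x y : L).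

Lemma alg_eq0 (a : F) : (a%:A == 0 :> L) = (a == 0).
Proof. exact: (fmorph_eq0 (in_alg L)). Qed.

Lemma algM (a b : F) : (a * b)%:A = a%:A * b%:A :> L.
Proof. exact: (rmorphM (in_alg L)). Qed.

Lemma algXz (a : F) (e : int) : (a ^ e)%:A = a%:A ^ e :> L.
Proof. exact: (fmorphXz (in_alg L)). Qed.

Lemma act0 f : act f 0 = 0.
Proof. by rewrite /act big1 // => s _; rewrite rmorph0 mulr0. Qed.

Lemma actD f x y : act f (x + y) = act f x + act f y.
Proof. by rewrite /act -big_split; apply: eq_bigr => s _; rewrite rmorphD mulrDr. Qed.

Lemma gal_algM (s : galG L) (a : F) x : s (a%:A * x) = a%:A * s x.
Proof. by rewrite rmorphM; congr (_ * _); apply: rmorph_alg. Qed.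

Lemma gal_alg_poly (s : galG L) (k : nat) (a : 'I_k -> F) y :
  s (\sum_(j < k) (a j)%:A * y ^+ j) = \sum_(j < k) (a j)%:A * s y ^+ j.
Proof.
rewrite rmorph_sum; apply: eq_bigr => j _.
by rewrite rmorphM rmorphXn; congr (_ * _); apply: rmorph_alg.
Qed.

Lemma act_alg f (a : F) x : act f (a%:A * x) = a%:A * act f x.
Proof.
rewrite /act mulr_sumr; apply: eq_bigr => s _.
by rewrite gal_algM mulrCA.
Qed.

Lemma actfZ (a : F) f x : act (a *: f) x = a%:A * act f x.
Proof.
by rewrite /act mulr_sumr; apply: eq_bigr => s _; rewrite ffunE -scalerAl mulr_algl.
Qed.

Lemma actf_sum (I : Type) (s : seq I) (P : pred I) (h : I -> KG L) x :
  act (\sum_(i <- s | P i) h i) x = \sum_(i <- s | P i) act (h i) x.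
Proof.
rewrite /act; under eq_bigr do rewrite sum_ffunE mulr_suml.
by rewrite exchange_big.
Qed.

Lemma lincombE (B : seq (KG L)) (c : KG L -> F) : lincomb B c = \sum_(b <- B) c b *: b.
Proof. by apply/ffunP => s; rewrite ffunE sum_ffunE; apply: eq_bigr => b _; rewrite ffunE mulr_algl. Qed.

Lemma card_galG :
  galois (1%VS : {vspace L}) fullv -> #|{: galG L}| = \dim (fullv : {vspace L}).
Proof.
move=> /galois_dim; rewrite dimv1 divn1 => ->.
have -> : 'Gal(fullv / 1%VS)%g = [set: galG L]; last by rewrite cardsT.
apply/eqP; rewrite eqEsubset subsetT /= -{1}(gal_fixedField [set: galG L]%G).
by apply: galS; apply: sub1v.
Qed.

Definition gal_delta (s : galG L) : KG L := [ffun t => (t == s)%:R].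

Lemma in_kG_span f : in_kG f -> f \in <<[seq gal_delta s | s <- enum (galG L : finType)]>>%VS.
Proof.
move=> f_kG; have /fin_all_exists[a fE] : forall s, exists a : F, f s = a%:A.
  by move=> s; have /vlineP[a ->] := f_kG s; exists a.
have -> : f = \sum_(s : galG L) a s *: gal_delta s.
  apply/ffunP => t; rewrite sum_ffunE (bigD1 t) //= big1 => [|s st].
    by rewrite !ffunE eqxx fE addr0.
  by rewrite !ffunE eq_sym (negbTE st) scaler0.
by apply: memv_suml => s _; apply/memvZ/memv_span/map_f; rewrite mem_enum.
Qed.

Definition seq_coef (B : seq (KG L)) (a : 'I_(size B) -> F) (b : KG L) : F :=
  oapp a 0 (insub (index b B)).

Lemma seq_coef_nth B a (i : 'I_(size B)) : uniq B -> seq_coef a B`_i = a i.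
Proof. by move=> Bu; rewrite /seq_coef (index_uniq 0) // valK. Qed.

Lemma lincomb_seq_coef B a : uniq B -> lincomb B (seq_coef a) = \sum_(i < size B) a i *: B`_i.
Proof.
by move=> Bu; rewrite lincombE (big_nth 0) big_mkord; apply: eq_bigr => i _; rewrite seq_coef_nth.
Qed.

End GroupRing.

Section DiscreteValuation.
Variables (F : fieldType) (L : splittingFieldType F) (v : L -> int).
Hypothesis Hv : is_dval v.

Lemma dvalM x y : x != 0 -> y != 0 -> v (x * y) = v x + v y.
Proof. by case: Hv => + _ _; apply. Qed.

Lemma dval1 : v 1 = 0.
Proof.
by have := dvalM (oner_neq0 L) (oner_neq0 L); rewrite mulr1 -{1}[v 1]add0r => /addIr <-.
Qed.

Lemma dvalV x : x != 0 -> v x^-1 = - v x.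
Proof. by move=> x0; have := dvalM x0 (invr_neq0 x0); rewrite mulfV // dval1; lia. Qed.

Lemma dvalN x : x != 0 -> v (- x) = v x.
Proof.
move=> x0; have Nx0 : - x != 0 by rewrite oppr_eq0.
by have := dvalM Nx0 Nx0; rewrite mulrNN dvalM //; lia.
Qed.

Lemma dvalXn x k : x != 0 -> v (x ^+ k) = k%:Z * v x.
Proof.
move=> x0; elim: k => [|k IH]; first by rewrite expr0 dval1 mul0r.
by rewrite exprS dvalM ?expf_neq0 // IH -addn1 PoszD mulrDl mul1r addrC.
Qed.

Lemma dvalXz x (z : int) : x != 0 -> v (x ^ z) = z * v x.
Proof.
move=> x0; case: z => k; first exact: dvalXn.
by rewrite /exprz dvalV ?expf_neq0 // dvalXn // NegzE mulNr.
Qed.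

Lemma vge0 m : vge v 0 m. Proof. by left. Qed.

Lemma vge_refl x : vge v x (v x). Proof. by right. Qed.

Lemma vgeE {x m} : x != 0 -> vge v x m <-> m <= v x.
Proof. by move=> x0; split=> [[x_eq0|//]|]; [rewrite x_eq0 eqxx in x0 | right]. Qed.

Lemma vgeW x a b : vge v x a -> b <= a -> vge v x b.
Proof. by case=> [->|h] ba; [left|right; apply: le_trans h]. Qed.

Lemma vgeM x y a b : vge v x a -> vge v y b -> vge v (x * y) (a + b).
Proof.
have [->|x0] := eqVneq x 0; first by rewrite mul0r; left.
have [->|y0] := eqVneq y 0; first by rewrite mulr0; left.
by move=> /(vgeE x0) ha /(vgeE y0) hb; right; rewrite dvalM // lerD.
Qed.

Lemma vgeN x a : vge v x a -> vge v (- x) a.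
Proof.
have [->|x0] := eqVneq x 0; first by rewrite oppr0.
by move=> /(vgeE x0) h; right; rewrite dvalN.
Qed.

Lemma vgeD x y a : vge v x a -> vge v y a -> vge v (x + y) a.
Proof.
have [->|x0] := eqVneq x 0; first by rewrite add0r.
have [->|y0] := eqVneq y 0; first by rewrite addr0.
have [->|xy0] := eqVneq (x + y) 0; first by left.
move=> /(vgeE x0) ha /(vgeE y0) hb; right.
by case: Hv => _ /(_ x y x0 y0 xy0) + _; apply: le_trans; rewrite le_min ha hb.
Qed.

Lemma vgeB x y a : vge v x a -> vge v y a -> vge v (x - y) a.
Proof. by move=> hx /vgeN; apply: vgeD. Qed.

Lemma vge_sum (I : Type) (s : seq I) (P : pred I) (g : I -> L) a :
  (forall i, P i -> vge v (g i) a) -> vge v (\sum_(i <- s | P i) g i) a.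
Proof. by move=> h; apply: (big_ind (vge v ^~ a)) => [|x y|//]; [exact: vge0 | exact: vgeD]. Qed.

Lemma Nvge_dvalS x : x != 0 -> ~ vge v x (v x + 1).
Proof. by move=> x0 /(vgeE x0); rewrite gerDl. Qed.

Lemma dvalD_dominant y z : y != 0 -> vge v z (v y + 1) ->
  y + z != 0 /\ v (y + z) = v y.
Proof.
move=> y0 hz; have yz0 : y + z != 0.
  apply/negP; rewrite addr_eq0 => /eqP y_eq; apply: (Nvge_dvalS y0).
  by rewrite {1}y_eq; apply: vgeN.
split=> //; apply/eqP; rewrite eq_le; apply/andP; split; last first.
  apply/(vgeE yz0)/vgeD; first exact: vge_refl.
  by apply: (vgeW hz); rewrite lerDl.
rewrite leNgt; apply/negP => lt_yz; apply: (Nvge_dvalS y0).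
by rewrite -{1}[y](addrK z); apply: vgeB hz; right; rewrite lezD1.
Qed.

Lemma vge_sum_distinct (I : eqType) (s : seq I) (g : I -> L) m :
  uniq s ->
  {in s &, forall i j, g i != 0 -> g j != 0 -> v (g i) = v (g j) -> i = j} ->
  vge v (\sum_(i <- s) g i) m -> {in s, forall i, vge v (g i) m}.
Proof.
move=> us inj_g hs.
have [nz|/hasPn z] := boolP (has (fun i => g i != 0) s); last first.
  by move=> i /z; rewrite negbK => /eqP->; apply: vge0.
have [i0 /andP[i0s gi0] min_i0] := seq_argmin (fun i => v (g i)) nz.
have rest : vge v (\sum_(i <- s | i != i0) g i) (v (g i0) + 1).
  rewrite big_seq_cond; apply: vge_sum => i /andP[i_s ii0].
  have [->|gi] := eqVneq (g i) 0; first exact: vge0.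
  right; rewrite lezD1 lt_neqAle min_i0 // andbT.
  by apply: contra_neq ii0 => /(inj_g _ _ i0s i_s gi0 gi)->.
have [sum_ne0 sumE] := dvalD_dominant gi0 rest.
move: hs; rewrite (bigD1_seq i0) //= (vgeE sum_ne0) sumE => le_m i i_s.
have [->|gi] := eqVneq (g i) 0; first exact: vge0.
by right; apply: le_trans le_m (min_i0 i i_s gi).
Qed.

Implicit Types f : KG L.

Lemma inC_act_vge i f y m : inC v i f -> vge v y m -> vge v (act f y) (m + i).
Proof.
move=> Cf; have [->|y0] := eqVneq y 0; first by rewrite act0 => _; apply: vge0.
by move/(vgeE y0) => le_my; apply: (vgeW (Cf y y0)); rewrite lerD2r.
Qed.

Lemma inCW i j f : inC v i f -> j <= i -> inC v j f.
Proof. by move=> Cf le_ji x x0; apply: (vgeW (Cf x x0)); rewrite lerD2l. Qed.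

Lemma inC_sum (I : Type) (s : seq I) (P : pred I) (h : I -> KG L) i :
  (forall k, P k -> inC v i (h k)) -> inC v i (\sum_(k <- s | P k) h k).
Proof. by move=> Ch x x0; rewrite actf_sum; apply: vge_sum => k /Ch/(_ x x0). Qed.

Lemma inC0 i : inC v i 0.
Proof. by move=> x _; left; rewrite /act big1 // => s _; rewrite ffunE mul0r. Qed.

Lemma inCZ i (a : F) f : a != 0 -> inC v i f -> inC v (i + v a%:A) (a *: f).
Proof.
move=> a0 Cf x x0; rewrite actfZ; apply: (vgeW (vgeM (vge_refl a%:A) (Cf x x0))).
lia.
Qed.

Section TotallyRamified.
Hypothesis Htr : totally_ramified v.
Variable pi : L.
Hypothesis Hpi : pi != 0 /\ v pi = 1.

Local Notation n := (\dim (fullv : {vspace L})).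

Lemma dvdz_dim_dval_alg (a : F) : a != 0 -> (n%:Z %| v a%:A)%Z.
Proof. by case: Htr => + _; apply. Qed.

Lemma pi_neq0 : pi != 0. Proof. by case: Hpi. Qed.

Lemma dval_piXz (z : int) : v (pi ^ z) = z.
Proof. by case: Hpi => pi0 vpi; rewrite dvalXz // vpi mulr1. Qed.

Lemma alg_piXn_neq0 (a : F) j : a != 0 -> a%:A * pi ^+ j != 0.
Proof. by move=> a0; rewrite mulf_neq0 ?alg_eq0 ?expf_neq0 ?pi_neq0. Qed.

Lemma dval_alg_piXn (a : F) (j : nat) : a != 0 -> v (a%:A * pi ^+ j) = v a%:A + j%:Z.
Proof.
by move=> a0; rewrite dvalM ?alg_eq0 ?expf_neq0 ?pi_neq0 // exprnP dval_piXz.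
Qed.

Lemma dval_alg_piXn_inj (a b : F) (i j : 'I_n) : a != 0 -> b != 0 ->
  v (a%:A * pi ^+ i) = v (b%:A * pi ^+ j) -> i = j.
Proof.
move=> a0 b0; rewrite !dval_alg_piXn //.
have [[p ->] [q ->]] := (dvdzP (dvdz_dim_dval_alg a0), dvdzP (dvdz_dim_dval_alg b0)).
move/(congr1 (fun z => (z %% n)%Z)).
by rewrite !modzMDl !modz_small ?ltz_nat ?ltn_ord // => /eqP; rewrite eqz_nat => /eqP/val_inj.
Qed.

Lemma vge_alg_piXn_terms (a : 'I_n -> F) m :
  vge v (\sum_(j < n) (a j)%:A * pi ^+ j) m -> forall j, vge v ((a j)%:A * pi ^+ j) m.
Proof.
move=> sum_ge j; apply: (vge_sum_distinct (index_enum_uniq _) _ sum_ge (mem_index_enum j)).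
move=> i k _ _; have [->|ai] := eqVneq (a i) 0; first by rewrite scale0r mul0r eqxx.
have [->|ak] := eqVneq (a k) 0; first by rewrite scale0r mul0r eqxx.
by move=> _ _; apply: dval_alg_piXn_inj.
Qed.

Lemma piXn_basis : basis_of fullv [tuple pi ^+ j | j < n].
Proof.
rewrite basisEfree size_tuple subvf leqnn !andbT; apply/freeP => a sum_eq0 j.
have [//|aj] := eqVneq (a j) 0; exfalso; apply: (Nvge_dvalS (alg_piXn_neq0 j aj)).
apply: vge_alg_piXn_terms; rewrite (_ : \sum_(i < n) _ = 0); first exact: vge0.
by rewrite -[RHS]sum_eq0; apply: eq_bigr => i _; rewrite -tnth_nth tnth_mktuple mulr_algl.
Qed.

Lemma piXn_expansion x : exists a : 'I_n -> F, x = \sum_(j < n) (a j)%:A * pi ^+ j.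
Proof.
exists (fun j => coord [tuple pi ^+ j | j < n] j x).
rewrite {1}(coord_basis piXn_basis (memvf x)).
by apply: eq_bigr => j _; rewrite -tnth_nth tnth_mktuple mulr_algl.
Qed.

Lemma residue_lift w : vge v w 0 -> exists a : F, vge v (w - a%:A) 1.
Proof.
have [a ->] := piXn_expansion w => /vge_alg_piXn_terms w_terms.
pose j0 := Ordinal (adim_gt0 (fullv : {subfield L})).
exists (a j0); rewrite (bigD1 j0) //= expr0 mulr1 addrC addrK.
apply: vge_sum => j jj0; have [->|aj] := eqVneq (a j) 0.
  by rewrite scale0r mul0r; apply: vge0.
have : v ((a j)%:A * pi ^+ j) != v ((1 : F)%:A * pi ^+ j0).
  by apply: contra_neq jj0; apply: dval_alg_piXn_inj; rewrite ?oner_neq0.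
rewrite scale1r mulr1 dval1; move: (w_terms j); rewrite !(vgeE (alg_piXn_neq0 j aj)).
by move=> vj_ge0 vj_neq0; rewrite -[1]add0r lezD1 lt_def vj_neq0.
Qed.

Lemma gal_dval_lb (s : galG L) : exists C, forall x, x != 0 -> vge v (s x) (v x - C).
Proof.
exists (n%:Z * `|v (s pi) - 1|) => x x0.
have [a xE] := piXn_expansion x.
have x_terms : forall j, vge v ((a j)%:A * pi ^+ j) (v x).
  by apply: vge_alg_piXn_terms; rewrite -xE; apply: vge_refl.
rewrite {1}xE gal_alg_poly; apply: vge_sum => j _.
have [->|aj] := eqVneq (a j) 0; first by rewrite scale0r mul0r; apply: vge0.
have spi0 : s pi != 0 by rewrite fmorph_eq0 pi_neq0.
move: (x_terms j); rewrite !(vgeE (alg_piXn_neq0 j aj)) => le_x; right.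
rewrite !dvalM ?alg_eq0 ?expf_neq0 ?pi_neq0 // in le_x *.
rewrite exprnP dval_piXz in le_x; rewrite dvalXn //.
have := @ler_Nmul_norm j n (v (s pi) - 1).
rewrite lez_nat (ltnW (ltn_ord j)) mulrBr mulr1 => /(_ isT) lb.
by apply: le_trans (lerD le_x lb) _; rewrite addrCA addrK addrC.
Qed.

Lemma exists_inC f : exists i, inC v i f.
Proof.
have /fin_all_exists[C hC] := gal_dval_lb.
have nonempty : has predT (index_enum (galG L)) by apply/hasP; exists 1%g; rewrite ?mem_index_enum.
have [s0 _ min_s0] := seq_argmin (fun s => v (f s) - C s) nonempty.
exists (v (f s0) - C s0) => x x0; rewrite /act; apply: vge_sum => s _.
have [->|fs0] := eqVneq (f s) 0; first by rewrite mul0r; apply: vge0.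
apply: (vgeW (vgeM (vge_refl (f s)) (hC s x x0))).
by have := min_s0 s (mem_index_enum s) isT; lia.
Qed.

Variable d : int.

Lemma depth_spec f j : ~ inC v j f ->
  inC v (depth v d f + d) f /\ ~ inC v (depth v d f + d + 1) f.
Proof.
move=> nCj; have [i Ci] := exists_inC f.
have le_ij : i <= j.
  by rewrite leNgt; apply/negP => /ltW lt_ji; apply: nCj; apply: inCW Ci lt_ji.
have [k [Ck nCk]] := int_threshold (P := inC v ^~ f) le_ij Ci nCj.
rewrite /depth; case: excluded_middle_informative => [h|[]]; last first.
  by exists (k - d); rewrite subrK.
by case: constructive_indefinite_description.
Qed.

Lemma depth_eq f m : inC v (m + d) f -> ~ inC v (m + d + 1) f -> depth v d f = m.
Proof.
move=> Cm nCm1; have [Cd nCd1] := depth_spec nCm1.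
apply/eqP; rewrite eq_le; apply/andP; split; rewrite leNgt; apply/negP => lt.
  by apply: nCm1; apply: inCW Cd _; rewrite addrAC lerD2r lezD1.
by apply: nCd1; apply: inCW Cm _; rewrite addrAC lerD2r lezD1.
Qed.

Lemma vge_piXz (z : int) : vge v (pi ^ z) z.
Proof. by right; rewrite dval_piXz. Qed.

Lemma vge_piXn_inv (j : nat) : vge v (pi ^+ j)^-1 (- j%:Z).
Proof. by rewrite exprnN; apply: vge_piXz. Qed.

Section Residue.
Variables (kbar : fieldType) (r : L -> kbar).
Hypothesis Hr : residue_map v r.

Lemma resD x y : vge v x 0 -> vge v y 0 -> r (x + y) = r x + r y.
Proof. by case: Hr => + _ _ _ _; apply. Qed.

Lemma resM x y : vge v x 0 -> vge v y 0 -> r (x * y) = r x * r y.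
Proof. by case: Hr => _ + _ _ _; apply. Qed.

Lemma res_vge1 x : vge v x 1 -> r x = 0.
Proof. by move=> x1; case: Hr => _ _ _ _ /(_ x (vgeW x1 ler01))[_]; apply. Qed.

Lemma res0 : r 0 = 0.
Proof. exact/res_vge1/vge0. Qed.

Lemma res_neq0 x : x != 0 -> v x = 0 -> r x != 0.
Proof.
move=> x0 vx0; have x_ge0 : vge v x 0 by right; rewrite vx0.
case: Hr => _ _ _ _ /(_ x x_ge0)[rx0 _]; apply/eqP => /rx0.
by rewrite -[1]add0r -{1}vx0; apply: Nvge_dvalS.
Qed.

Lemma res_sum (I : Type) (s : seq I) (P : pred I) (g : I -> L) :
  (forall i, P i -> vge v (g i) 0) ->
  r (\sum_(i <- s | P i) g i) = \sum_(i <- s | P i) r (g i).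
Proof.
move=> g_ge0; elim: s => [|i s IH]; first by rewrite !big_nil res0.
rewrite !big_cons; case: ifP => // Pi.
rewrite resD ?IH //; [exact: g_ge0 | exact: vge_sum].
Qed.

Lemma res_act_mull i f w y (j : nat) : inC v i f -> vge v w 0 -> vge v y (j%:Z - i) ->
  r (act f (w * y) / pi ^+ j) = r w * r (act f y / pi ^+ j).
Proof.
move=> Cf w_ge0 y_ge; have [a z_ge1] := residue_lift w_ge0; set z := w - a%:A in z_ge1.
have wE : w = a%:A + z by rewrite /z addrC subrK.
have aE : a%:A = w - z by rewrite /z opprB addrC subrK.
have a_ge0 : vge v a%:A 0 by rewrite aE; exact: vgeB w_ge0 (vgeW z_ge1 ler01).
have main_ge0 : vge v (act f y / pi ^+ j) 0.
  by apply: (vgeW (vgeM (inC_act_vge Cf y_ge) (vge_piXn_inv j))); lia.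
have rest_ge1 : vge v (act f (z * y) / pi ^+ j) 1.
  by apply: (vgeW (vgeM (inC_act_vge Cf (vgeM z_ge1 y_ge)) (vge_piXn_inv j))); lia.
rewrite wE mulrDl actD act_alg mulrDl -mulrA.
rewrite resD; last 2 first.
- by apply: (vgeW (vgeM a_ge0 main_ge0)); rewrite addr0.
- exact: vgeW rest_ge1 ler01.
rewrite resM // (res_vge1 rest_ge1) addr0 resD //; last exact: vgeW z_ge1 ler01.
by rewrite (res_vge1 z_ge1) addr0.
Qed.

Lemma vge_p_entry i k f (j : nat) :
  inC v (i + k) f -> vge v (act f (pi ^ (j%:Z - i)) / pi ^+ j) k.
Proof.
move=> Cf; apply: (vgeW (vgeM (inC_act_vge Cf (vge_piXz _)) (vge_piXn_inv j))).
lia.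
Qed.

Lemma p_zero i f : inC v (i + 1) f -> p_ r d pi i f = 0.
Proof.
by move=> Cf; rewrite /p_ big1 // => j _; rewrite (res_vge1 (vge_p_entry j Cf)) mulr0 mul0r.
Qed.

Lemma p_sum i (I : Type) (s : seq I) (P : pred I) (h : I -> KG L) :
  (forall k, P k -> inC v i (h k)) ->
  p_ r d pi i (\sum_(k <- s | P k) h k) = \sum_(k <- s | P k) p_ r d pi i (h k).
Proof.
move=> Ch; rewrite /p_ exchange_big /=; apply: eq_bigr => j _.
rewrite actf_sum mulr_suml [r (\sum_(_ <- s | _) _)]res_sum => [|k Pk]; last first.
  by apply: vge_p_entry; rewrite addr0; apply: Ch.
by rewrite mulr_sumr rmorph_sum mulr_suml.
Qed.

Definition unit_res (a : F) : kbar := r (a%:A * pi ^ (- v a%:A)).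

Lemma dval_unit_part (a : F) : a != 0 -> v (a%:A * pi ^ (- v a%:A)) = 0.
Proof. by move=> a0; rewrite dvalM ?alg_eq0 ?expfz_neq0 ?pi_neq0 // dval_piXz subrr. Qed.

Lemma unit_res_neq0 (a : F) : a != 0 -> unit_res a != 0.
Proof.
by move=> a0; apply: res_neq0 (dval_unit_part a0); rewrite mulf_neq0 ?alg_eq0 ?expfz_neq0 ?pi_neq0.
Qed.

Lemma p_scale i (a : F) f : a != 0 -> inC v i f ->
  p_ r d pi (i + v a%:A) (a *: f) = unit_res a *: p_ r d pi i f.
Proof.
move=> a0 Cf; rewrite /p_ scaler_sumr; apply: eq_bigr => j _.
have -> : act (a *: f) (pi ^ (j%:Z - (i + v a%:A))) =
          act f (a%:A * pi ^ (- v a%:A) * pi ^ (j%:Z - i)).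
  by rewrite actfZ -act_alg -mulrA -expfzDr ?pi_neq0 // opprD addrA addrC.
rewrite (res_act_mull Cf _ (vge_piXz _)); last by right; rewrite dval_unit_part.
by rewrite mulrCA polyCM -mulrA mul_polyC.
Qed.

Section GradedIndependence.
Variable B : seq (KG L).
Hypothesis HBind : graded_independent v r d pi B.

Lemma frakp_neq0 b : b \in B -> frakp v r d pi b != 0.
Proof.
move=> bB; apply/eqP => fb0.
have sum0 : \sum_(x <- B | (depth v d x == depth v d b %[mod n%:Z])%Z)
              (x == b)%:R *: frakp v r d pi x = 0.
  by apply: big1 => x _; case: eqP => [->|_]; rewrite ?fb0 ?scaler0 ?scale0r.
by have /eqP := HBind sum0 bB (eqxx _); rewrite eqxx oner_eq0.
Qed.

Lemma inC_depth b : b \in B -> inC v (depth v d b + d) b.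
Proof.
move=> bB; have [C1|nC1] := classic (inC v (depth v d b + d + 1) b).
  by case/negP: (frakp_neq0 bB); rewrite /frakp p_zero.
by case: (depth_spec nC1).
Qed.

Lemma depth_eqmod (a : F) b m : a != 0 -> v a%:A + depth v d b = m ->
  (depth v d b == m %[mod n%:Z])%Z.
Proof.
move=> a0 <-; rewrite eqz_mod_dvd (addrC (v _)) opprD addrA subrr add0r rpredN.
exact: dvdz_dim_dval_alg.
Qed.

Lemma inCZ_depth (a : F) b j : b \in B ->
  (a != 0 -> j <= v a%:A + depth v d b + d) -> inC v j (a *: b).
Proof.
move=> bB le_j; have [->|a0] := eqVneq a 0; first by rewrite scale0r; apply: inC0.
by apply: (inCW (inCZ a0 (inC_depth bB))); have := le_j a0; lia.
Qed.

Section LeadingTerms.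
Variables (c : KG L -> F) (m : int).
Hypothesis min_m : forall b, b \in B -> c b != 0 -> m <= v (c b)%:A + depth v d b.

Lemma inC_lincomb : inC v (m + d) (lincomb B c).
Proof.
rewrite lincombE big_seq; apply: inC_sum => b bB.
by apply: inCZ_depth => // cb0; rewrite lerD2r; apply: min_m.
Qed.

Lemma p_lincomb : p_ r d pi (m + d) (lincomb B c) =
  \sum_(b <- B | (c b != 0) && (v (c b)%:A + depth v d b == m))
     unit_res (c b) *: frakp v r d pi b.
Proof.
rewrite lincombE big_seq p_sum => [|b bB]; last first.
  by apply: inCZ_depth => // cb0; rewrite lerD2r; apply: min_m.
rewrite big_mkcond [RHS]big_seq_cond [RHS]big_mkcond; apply: eq_bigr => b _.
case: ifP => //= bB.
have [->|cb0] := eqVneq (c b) 0; first by rewrite scale0r p_zero //; apply: inC0.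
have := min_m bB cb0; rewrite le_eqVlt => /orP[/eqP eq_m|lt_m].
  have -> : m + d = depth v d b + d + v (c b)%:A by rewrite eq_m; lia.
  by rewrite (p_scale cb0 (inC_depth bB)) eq_m eqxx.
rewrite (gt_eqF lt_m) p_zero //; apply: inCZ_depth => // _.
by rewrite addrAC lerD2r lezD1.
Qed.

Lemma not_inC_lincomb : (exists2 b, b \in B & c b != 0 /\ v (c b)%:A + depth v d b = m) ->
  ~ inC v (m + d + 1) (lincomb B c).
Proof.
move=> [b0 b0B [cb00 eb0]] /p_zero; rewrite p_lincomb => sum0.
pose lam b := if (c b != 0) && (v (c b)%:A + depth v d b == m) then unit_res (c b) else 0.
suff : lam b0 = 0 by rewrite /lam cb00 eb0 eqxx /=; apply/eqP/unit_res_neq0.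
apply: (HBind _ b0B (depth_eqmod cb00 eb0)).
rewrite -[RHS]sum0 big_mkcond [RHS]big_mkcond; apply: eq_bigr => b _ /=.
rewrite /lam; case: (boolP (_ && _)) => [/andP[cb0 /eqP eb]|_]; last by rewrite scale0r if_same.
by rewrite (depth_eqmod cb0 eb).
Qed.

End LeadingTerms.

Lemma depth_lincomb c m :
  (exists2 b, b \in B & c b != 0 /\ v (c b)%:A + depth v d b = m) ->
  (forall b, b \in B -> c b != 0 -> m <= v (c b)%:A + depth v d b) ->
  depth v d (lincomb B c) = m.
Proof. by move=> ex_m min_m; apply: depth_eq (inC_lincomb min_m) (not_inC_lincomb min_m ex_m). Qed.

Lemma frakp_lincomb c m :
  (exists2 b, b \in B & c b != 0 /\ v (c b)%:A + depth v d b = m) ->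
  (forall b, b \in B -> c b != 0 -> m <= v (c b)%:A + depth v d b) ->
  frakp v r d pi (lincomb B c) =
  \sum_(b <- B | (c b != 0) && (v (c b)%:A + depth v d b == m))
     unit_res (c b) *: frakp v r d pi b.
Proof. by move=> ex_m min_m; rewrite /frakp (depth_lincomb ex_m min_m) p_lincomb. Qed.

Lemma inC_lincomb_le c i b : b \in B -> c b != 0 -> inC v i (lincomb B c) ->
  i <= v (c b)%:A + depth v d b + d.
Proof.
move=> bB cb0 Ci; have has_c : has (fun b => c b != 0) B by apply/hasP; exists b.
have [b0 /andP[b0B cb00] min_b0] := seq_argmin (fun b => v (c b)%:A + depth v d b) has_c.
have /not_inC_lincomb nC := min_b0.
rewrite leNgt; apply/negP => lt_i; apply: nC; first by exists b0.
by apply: (inCW Ci); have := min_b0 b bB cb0; lia.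
Qed.

Lemma lincomb_eq0 c : lincomb B c = 0 -> forall b, b \in B -> c b = 0.
Proof.
move=> c0 b bB; apply/eqP/negP => /negP cb0.
have := inC_lincomb_le (i := v (c b)%:A + depth v d b + d + 1) bB cb0.
by rewrite c0 => /(_ (inC0 _)); rewrite lezD1 ltxx.
Qed.

Variable pik : F.
Hypothesis Hpik : pik != 0 /\ v pik%:A = n%:Z.

Lemma dval_pikXz (e : int) : v (pik ^ e)%:A = e * n%:Z.
Proof. by case: Hpik => pik0 vpik; rewrite algXz dvalXz ?alg_eq0 // vpik. Qed.

Lemma inC_lincombP i f :
  (inC v i f /\ exists c : KG L -> F, f = lincomb B c) <->
  (exists c : KG L -> F, f = lincomb B c /\
     forall b, b \in B ->
       exists2 u : F, (u == 0) || (0 <= v u%:A) &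
         c b = pik ^ (((i - d - depth v d b - 1) %/ n%:Z)%Z + 1) * u).
Proof.
have n_gt0 : 0 < n%:Z by rewrite ltz_nat adim_gt0.
have pik0 : pik != 0 by case: Hpik.
split=> [[Ci [c fE]]|[c [fE c_ge]]]; last first.
  split; last by exists c.
  rewrite fE lincombE big_seq; apply: inC_sum => b bB.
  apply: inCZ_depth => // cb0; have [u u_ge0 cbE] := c_ge b bB.
  have u0 : u != 0 by apply: contraNneq cb0 => u0; rewrite cbE u0 mulr0.
  rewrite (negbTE u0) /= in u_ge0.
  rewrite cbE algM dvalM ?alg_eq0 ?expfz_neq0 // dval_pikXz.
  have := ceilz_leP (i - d - depth v d b) (((i - d - depth v d b - 1) %/ n%:Z)%Z + 1) n_gt0.
  by rewrite lexx => /esym; lia.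
rewrite fE in Ci; exists c; split=> // b bB; set e := (_ + 1)%R.
have [->|cb0] := eqVneq (c b) 0; first by exists 0; rewrite ?eqxx ?mulr0.
have pe0 : pik ^ e != 0 by rewrite expfz_neq0.
exists (c b / pik ^ e); last by rewrite mulrC divfK.
have u0 : c b / pik ^ e != 0 by rewrite mulf_neq0 ?invr_eq0.
have := dvalM (x := (pik ^ e)%:A) (y := (c b / pik ^ e)%:A); rewrite !alg_eq0 => /(_ pe0 u0).
rewrite -algM mulrC divfK // dval_pikXz => vcb; rewrite (negbTE u0) /=.
have [t vt] := dvdzP (dvdz_dim_dval_alg cb0).
have le_et : e <= t.
  by rewrite /e ceilz_leP // -vt; have := inC_lincomb_le bB cb0 Ci; lia.
have : e * n%:Z <= t * n%:Z by rewrite ler_pM2r.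
lia.
Qed.

Hypothesis HBuniq : uniq B.

Lemma free_graded : free B.
Proof.
apply/(@freeP _ _ _ (in_tuple B)) => a sum0 i; rewrite -(seq_coef_nth a i HBuniq).
by apply: lincomb_eq0 (mem_nth 0 (ltn_ord i)); rewrite lincomb_seq_coef.
Qed.

Lemma graded_base_of_size : galois (1%VS : {vspace L}) fullv -> size B = n ->
  (forall b, b \in B -> in_kG b) -> graded_base v r d pi B.
Proof.
move=> Hgal szB B_kG; split=> // f f_kG.
set D := [seq gal_delta s | s <- enum (galG L : finType)].
have spanB : <<B>>%VS = <<D>>%VS.
  apply/eqP; rewrite eqEdim; apply/andP; split.
    by apply/span_subvP => b /B_kG/in_kG_span.
  by rewrite (eqnP free_graded) szB -(card_galG Hgal) cardT -(size_map (@gal_delta _ _)) dim_span.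
have /coord_span fE : f \in <<in_tuple B>>%VS by rewrite spanB in_kG_span.
by exists (seq_coef (fun i => coord (in_tuple B) i f)); rewrite lincomb_seq_coef.
Qed.

End GradedIndependence.

End Residue.
End TotallyRamified.
End DiscreteValuation.

Theorem proposition3p1p2
  (F : fieldType) (L : splittingFieldType F)
  (Hgal : galois (1%VS : {vspace L}) fullv)
  (v : L -> int) (Hv : is_dval v)
  (HcK : complete_K v) (Hck : complete_k v)
  (Htr : totally_ramified v)
  (kbar : fieldType) (r : L -> kbar) (Hr : residue_map v r)
  (d : int) (Hd : different_val v (d + (\dim (fullv : {vspace L}))%:Z - 1))
  (pi : L) (Hpi : pi != 0 /\ v pi = 1)
  (pik : F) (Hpik : pik != 0 /\ v pik%:A = (\dim (fullv : {vspace L}))%:Z)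
  (B : seq (KG L)) (HBuniq : uniq B) (HB0 : forall b, b \in B -> b != 0)
  (HBind : graded_independent v r d pi B) :
  (* part 1 *)
  (forall (c : KG L -> F) (m : int),
     (exists2 b, b \in B & c b != 0 /\ v (c b)%:A + depth v d b = m) ->
     (forall b, b \in B -> c b != 0 -> m <= v (c b)%:A + depth v d b) ->
     depth v d (lincomb B c) = m /\
     exists lam : KG L -> kbar,
       (forall b, b \in B -> c b != 0 -> v (c b)%:A + depth v d b = m ->
          lam b != 0) /\
       frakp v r d pi (lincomb B c) =
       \sum_(b <- B | (c b != 0) && (v (c b)%:A + depth v d b == m))
          lam b *: frakp v r d pi b)
  /\
  (* part 2 *)
  (forall (i : int) (f : KG L),
     (inC v i f /\ exists c : KG L -> F, f = lincomb B c) <->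
     (exists c : KG L -> F, f = lincomb B c /\
        forall b, b \in B ->
          exists2 u : F, (u == 0) || (0 <= v u%:A) &
            c b = pik ^ (((i - d - depth v d b - 1) %/
                           (\dim (fullv : {vspace L}))%:Z)%Z + 1) * u))
  /\
  (size B = \dim (fullv : {vspace L}) -> (forall b, b \in B -> in_kG b) ->
     graded_base v r d pi B).
Proof.
split; [|split].
- move=> c m ex_m min_m; split; first exact: (depth_lincomb Hv Htr Hpi Hr HBind ex_m min_m).
  exists (fun b => unit_res v pi r (c b)); split; first by move=> b _ cb0 _; apply: unit_res_neq0.
  exact: (frakp_lincomb Hv Htr Hpi Hr HBind ex_m min_m).
- exact: (inC_lincombP Hv Htr Hpi Hr HBind Hpik).
- exact: (graded_base_of_size Hv Htr Hpi Hr HBind HBuniq Hgal).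
Qed.
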